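(* Let $R$ be a commutative noetherian ring, $M$ any $R$-module and $N$ a finitely generated $R$-module. Then $\operatorname{Att}_R(M\otimes_R N)=\operatorname{Att}_R(M)\cap\operatorname{Supp}_R(N)$.
   Context: A prime ideal $\mathfrak{p}$ is attached to an $R$-module $M$ if $\mathfrak{p}=\operatorname{Ann}_R(M/U)$ for some submodule $U\subseteq M$, equivalently $\mathfrak{p}=\operatorname{Ann}_R(M/\mathfrak{p}M)$; $\operatorname{Att}_R(M)$ denotes the set of attached primes. *)

From HB Require Import structures.
From mathcomp Require Import all_boot all_order all_algebra.
Set Implicit Arguments. Unset Strict Implicit. Unset Printing Implicit Defensive.
Import GRing.Theory.
Local Open Scope ring_scope.

Section Defs.
Variable R : comNzRingType.

Definition is_ideal (I : R -> Prop) : Prop :=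
  [/\ I 0, (forall x y, I x -> I y -> I (x + y)) & (forall r x, I x -> I (r * x))].

Definition is_prime_ideal (P : R -> Prop) : Prop :=
  [/\ is_ideal P, ~ P 1 & (forall x y, P (x * y) -> P x \/ P y)].

Definition noetherian_ring : Prop :=
  forall I : R -> Prop, is_ideal I ->
    exists s : seq R, (forall x, x \in s -> I x) /\
      (forall x, I x -> exists c : nat -> R, x = \sum_(i < size s) c i * s`_i).

Definition is_submodule (M : lmodType R) (U : M -> Prop) : Prop :=
  [/\ U 0, (forall x y, U x -> U y -> U (x + y)) & (forall (r : R) x, U x -> U (r *: x))].

Definition ann_quot (M : lmodType R) (U : M -> Prop) : R -> Prop :=
  fun r => forall m : M, U (r *: m).

Definition attached (M : lmodType R) (p : R -> Prop) : Prop :=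
  is_prime_ideal p /\
  exists U : M -> Prop, is_submodule U /\ (forall r, p r <-> ann_quot U r).

(* p in Supp(N) : p prime and N_p <> 0, i.e. some n/1 <> 0 in N_p,
   i.e. some n is killed by no s outside p. *)
Definition in_support (N : lmodType R) (p : R -> Prop) : Prop :=
  is_prime_ideal p /\ exists n : N, forall s : R, ~ p s -> s *: n <> 0.

Definition finitely_generated (N : lmodType R) : Prop :=
  exists s : seq N, forall n : N,
    exists c : nat -> R, n = \sum_(i < size s) c i *: s`_i.

Definition lin_map (A B : lmodType R) (g : A -> B) : Prop :=
  forall (a : R) x y, g (a *: x + y) = a *: g x + g y.

Definition bilinear_map (A B C : lmodType R) (f : A -> B -> C) : Prop :=
  (forall b, lin_map (fun a => f a b)) /\ (forall a, lin_map (f a)).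

Definition is_tensor_product (M N T : lmodType R) (t : M -> N -> T) : Prop :=
  bilinear_map t /\
  forall (P : lmodType R) (f : M -> N -> P), bilinear_map f ->
    exists g : T -> P, [/\ lin_map g, (forall m n, g (t m n) = f m n) &
      (forall g' : T -> P, lin_map g' -> (forall m n, g' (t m n) = f m n) ->
         forall x, g' x = g x)].

End Defs.

From HB Require Import structures.
From mathcomp Require Import all_boot all_order all_algebra.
From mathcomp Require Import boolp.
Set Implicit Arguments. Unset Strict Implicit. Unset Printing Implicit Defensive.
Import GRing.Theory.
Local Open Scope ring_scope.
Local Open Scope quotient_scope.

(* A prime p is attached to V iff Ann(V/pV) = p, so the theorem compares
   Ann(T/pT) with Ann(M/pM). As T is spanned by pure tensors, Ann(M/pM) is
   contained in Ann(T/pT), and an element outside p killing N kills T; this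
   gives Att(T) <= Att(M) :&: Supp(N). Conversely, if N_p <> 0 then by
   Nakayama N/pN does not vanish over the fraction field of R/p, so some
   c : N -> R, linear modulo p, has c(b) outside p. The bilinear map
   (m, n) |-> c(n) m mod pM induces T -> M/pM killing pT. *)

Section Ideals.
Variables (R : comNzRingType) (I : R -> Prop).
Hypothesis hI : is_ideal I.

Lemma ideal0 : I 0. Proof. by case: hI. Qed.
Lemma idealD x y : I x -> I y -> I (x + y). Proof. by case: hI => _ h _; apply: h. Qed.
Lemma idealM r x : I x -> I (r * x). Proof. by case: hI => _ _ h; apply: h. Qed.
Lemma idealMr r x : I x -> I (x * r). Proof. by rewrite mulrC; apply: idealM. Qed.
Lemma idealN x : I x -> I (- x). Proof. by rewrite -mulN1r; apply: idealM. Qed.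
Lemma idealB x y : I x -> I y -> I (x - y).
Proof. by move=> Ix Iy; apply: idealD => //; apply: idealN. Qed.

End Ideals.

Section PrimeIdeals.
Variables (R : comNzRingType) (p : R -> Prop).
Hypothesis hp : is_prime_ideal p.

Lemma prime_ideal_is_ideal : is_ideal p. Proof. by case: hp. Qed.
Lemma prime_idealN1 : ~ p 1. Proof. by case: hp. Qed.
Lemma prime_idealM x y : p (x * y) -> p x \/ p y. Proof. by case: hp => _ _; apply. Qed.
Lemma prime_ideal_outM x y : ~ p x -> ~ p y -> ~ p (x * y).
Proof. by move=> px py /prime_idealM []. Qed.

End PrimeIdeals.

Section Submodules.
Variables (R : comNzRingType) (V : lmodType R) (U : V -> Prop).
Hypothesis hU : is_submodule U.

Lemma submod0 : U 0. Proof. by case: hU. Qed.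
Lemma submodD x y : U x -> U y -> U (x + y). Proof. by case: hU => _ h _; apply: h. Qed.
Lemma submodZ r x : U x -> U (r *: x). Proof. by case: hU => _ _ h; apply: h. Qed.
Lemma submodN x : U x -> U (- x). Proof. by rewrite -scaleN1r; apply: submodZ. Qed.
Lemma submodB x y : U x -> U y -> U (x - y).
Proof. by move=> Ux Uy; apply: submodD => //; apply: submodN. Qed.

End Submodules.

Lemma zero_submod (R : comNzRingType) (V : lmodType R) : is_submodule (fun x : V => x = 0).
Proof. by split => [|x y -> ->|r x ->]; rewrite ?addr0 ?scaler0. Qed.

Section LinearMaps.
Variables (R : comNzRingType) (A B : lmodType R) (g : A -> B).
Hypothesis hg : lin_map g.

Lemma lin_map0 : g 0 = 0.
Proof. by have := hg (-1) 0 0; rewrite scaler0 addr0 scaleN1r addNr. Qed.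
Lemma lin_mapZ a x : g (a *: x) = a *: g x.
Proof. by have := hg a x 0; rewrite !addr0 lin_map0 addr0. Qed.

Lemma preim_submod (S : B -> Prop) : is_submodule S -> is_submodule (fun x => S (g x)).
Proof.
move=> hS; split => [|x y Sx Sy|r x Sx]; first by rewrite lin_map0; apply: submod0.
  by have := hg 1 x y; rewrite !scale1r => ->; apply: submodD.
by rewrite lin_mapZ; apply: submodZ.
Qed.

End LinearMaps.

Lemma scale_lin_map (R : comNzRingType) (V : lmodType R) (w : R) :
  lin_map (fun x : V => w *: x).
Proof. by move=> a x y; rewrite scalerDr !scalerA mulrC. Qed.

Lemma scale_eq0_submod (R : comNzRingType) (V : lmodType R) (w : R) :
  is_submodule (fun x : V => w *: x = 0).
Proof. exact (preim_submod (scale_lin_map w) (zero_submod V)). Qed.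

Section Combinations.
Variables (R : comNzRingType) (V : lmodType R).

Definition comb (e : nat -> R) (l : seq V) : V := \sum_(i < size l) e i *: l`_i.

Lemma comb_cons e g l : comb e (g :: l) = e 0%N *: g + comb (fun i => e i.+1) l.
Proof. by rewrite /comb big_ord_recl. Qed.
Lemma comb0 l : comb (fun _ => 0) l = 0.
Proof. by rewrite /comb big1 // => i _; rewrite scale0r. Qed.
Lemma combD e f l : comb (fun i => e i + f i) l = comb e l + comb f l.
Proof. by rewrite /comb -big_split; apply: eq_bigr => i _; rewrite scalerDl. Qed.
Lemma combZ a e l : comb (fun i => a * e i) l = a *: comb e l.
Proof. by rewrite /comb scaler_sumr; apply: eq_bigr => i _; rewrite scalerA. Qed.
Lemma combN e l : comb (fun i => - e i) l = - comb e l.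
Proof. by rewrite /comb -sumrN; apply: eq_bigr => i _; rewrite scaleNr. Qed.
Lemma combB e f l : comb (fun i => e i - f i) l = comb e l - comb f l.
Proof. by rewrite combD combN. Qed.

Lemma submod_comb (U : V -> Prop) e l : is_submodule U ->
  (forall x, x \in l -> U x) -> U (comb e l).
Proof.
move=> hU Ul; apply: (big_ind U (submod0 hU) (submodD hU)) => i _.
by apply: submodZ => //; apply/Ul/mem_nth.
Qed.

Definition ideal_comb (I : R -> Prop) (l : seq V) (y : V) :=
  exists2 e, (forall j, I (e j)) & y = comb e l.

Lemma ideal_comb_submod (I : R -> Prop) l : is_ideal I -> is_submodule (ideal_comb I l).
Proof.
move=> hI; split.
- by exists (fun _ => 0); [move=> _; apply: ideal0 | rewrite comb0].
- move=> _ _ [e Ie ->] [f If ->]; exists (fun i => e i + f i); last by rewrite combD.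
  by move=> j; apply: idealD.
- move=> r _ [e Ie ->]; exists (fun i => r * e i); last by rewrite combZ.
  by move=> j; apply: idealM.
Qed.

End Combinations.

Section IdealSmul.
Variables (R : comNzRingType) (I : R -> Prop) (V : lmodType R).

Inductive ideal_smul : V -> Prop :=
  | ideal_smul0 : ideal_smul 0
  | ideal_smulDZ a x v : I a -> ideal_smul v -> ideal_smul (a *: x + v).

Lemma ideal_smulZ a x : I a -> ideal_smul (a *: x).
Proof. by move=> Ia; rewrite -[_ *: _]addr0; apply: ideal_smulDZ => //; apply: ideal_smul0. Qed.

Lemma ideal_smul_min (S : V -> Prop) : is_submodule S ->
  (forall a x, I a -> S (a *: x)) -> forall v, ideal_smul v -> S v.
Proof.
move=> hS SI v; elim => [|a x w Ia _ Sw]; first exact: submod0.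
by apply: submodD => //; apply: SI.
Qed.

Hypothesis hI : is_ideal I.

Lemma ideal_smul_submod : is_submodule ideal_smul.
Proof.
split => [|x y|r x]; first exact: ideal_smul0.
  elim => [|a z v Ia _ IHv] Iy; first by rewrite add0r.
  by rewrite -addrA; apply: ideal_smulDZ => //; apply: IHv.
elim => [|a z v Ia _ IHv]; first by rewrite scaler0; apply: ideal_smul0.
by rewrite scalerDr scalerA; apply: ideal_smulDZ => //; apply: idealM.
Qed.

End IdealSmul.
Arguments ideal_smul {R} I {V}.

Lemma ideal_smul_lin (R : comNzRingType) (I : R -> Prop) (A B : lmodType R)
  (g : A -> B) v : lin_map g -> ideal_smul I v -> ideal_smul I (g v).
Proof.
move=> hg; elim => [|a x w Ia _ Igw]; first by rewrite lin_map0 //; apply: ideal_smul0.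
by rewrite hg; apply: ideal_smulDZ.
Qed.

Lemma attachedP (R : comNzRingType) (p : R -> Prop) (V : lmodType R) :
  is_prime_ideal p ->
  attached V p <-> (forall r, ann_quot (@ideal_smul _ p V) r -> p r).
Proof.
move=> hp; split.
  case=> _ [U [hU pU]] r r_ann; apply/pU => m.
  by apply: (ideal_smul_min hU _ (r_ann m)) => a x /pU; apply.
move=> ann_p; split => //; exists (ideal_smul p); split.
  exact/ideal_smul_submod/prime_ideal_is_ideal.
by move=> r; split => [pr m|]; [apply: ideal_smulZ | apply: ann_p].
Qed.

(* [hU] does not occur in the body: it lets the [zmod_closed] instance below
   be found from the predicate alone. *)
Definition submod_pred (R : comNzRingType) (V : lmodType R) (U : V -> Prop)
  (hU : is_submodule U) : {pred V} := fun x => `[< U x >].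

Notation quot_mod hU := {ideal_quot submod_pred hU}.

Section QuotientModule.
Variables (R : comNzRingType) (V : lmodType R) (U : V -> Prop).
Hypothesis hU : is_submodule U.

Lemma submod_pred_zmod_closed : zmod_closed (submod_pred hU).
Proof.
split=> [|x y]; rewrite !unfold_in /submod_pred; first by apply/asboolP; apply: submod0.
by move=> /asboolP Ux /asboolP Uy; apply/asboolP; apply: submodB.
Qed.

HB.instance Definition _ :=
  GRing.isZmodClosed.Build V (submod_pred hU) submod_pred_zmod_closed.

Lemma pi_eqP x y : \pi_(quot_mod hU) x = \pi y <-> U (x - y).
Proof. by rewrite (rwP eqP) piE Quotient.equivE unfold_in; split => /asboolP. Qed.

Definition quot_scale (r : R) := lift_op1 (quot_mod hU) ( *:%R r).

Lemma pi_scale r : {morph \pi_(quot_mod hU) : x / r *: x >-> quot_scale r x}.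
Proof.
move=> x; unlock quot_scale; apply/pi_eqP; rewrite -scalerBr; apply: submodZ => //.
by apply/pi_eqP; rewrite reprK.
Qed.
Canonical pi_scale_morph r := PiMorph1 (pi_scale r).

Lemma quot_scaleA a b x : quot_scale a (quot_scale b x) = quot_scale (a * b) x.
Proof. by rewrite -[x]reprK !piE scalerA. Qed.
Lemma quot_scale1 : left_id 1 quot_scale.
Proof. by move=> x; rewrite -[x]reprK !piE scale1r. Qed.
Lemma quot_scaleDr : right_distributive quot_scale +%R.
Proof. by move=> r x y; rewrite -[x]reprK -[y]reprK !piE scalerDr. Qed.
Lemma quot_scaleDl x : {morph quot_scale^~ x : a b / a + b}.
Proof. by move=> a b; rewrite -[x]reprK !piE scalerDl. Qed.

HB.instance Definition _ := GRing.Zmodule_isLmodule.Build R (quot_mod hU)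
  quot_scaleA quot_scale1 quot_scaleDr quot_scaleDl.

Lemma piZ r x : \pi_(quot_mod hU) (r *: x) = r *: \pi_(quot_mod hU) x.
Proof. exact: pi_scale. Qed.

Lemma pi_lin_map : lin_map \pi_(quot_mod hU).
Proof. by move=> a x y; rewrite -piZ raddfD. Qed.

Lemma pi_eq0 x : \pi_(quot_mod hU) x = 0 <-> U x.
Proof. by rewrite -(raddf0 \pi_(quot_mod hU)) pi_eqP subr0. Qed.

End QuotientModule.

Definition linear_mod (R : comNzRingType) (N : lmodType R) (I : R -> Prop) (c : N -> R) :=
  forall a x y, I (c (a *: x + y) - (a * c x + c y)).

Section Tensor.
Variables (R : comNzRingType) (M N T : lmodType R) (t : M -> N -> T).
Hypothesis ht : is_tensor_product t.

Lemma tensor_linl n : lin_map (t^~ n). Proof. by case: ht => [[]]. Qed.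
Lemma tensor_linr m : lin_map (t m). Proof. by case: ht => [[]]. Qed.

Lemma tensor_span (S : T -> Prop) : is_submodule S ->
  (forall m n, S (t m n)) -> forall x, S x.
Proof.
move=> hS St x.
have zero_lin : lin_map (fun _ : T => 0 : quot_mod hS).
  by move=> ? ? ?; rewrite scaler0 addr0.
have zero_bilin : bilinear_map (fun (_ : M) (_ : N) => 0 : quot_mod hS).
  by split=> ? ? ? ?; rewrite scaler0 addr0.
have [g [_ _ g_uniq]] := ht.2 _ _ zero_bilin.
have g0 := g_uniq _ zero_lin (fun _ _ => erefl) x.
have g_pi := g_uniq _ (pi_lin_map hS) (fun m n => proj2 (pi_eq0 hS _) (St m n)) x.
by apply/(pi_eq0 hS); rewrite g_pi -g0.
Qed.

Lemma ann_quot_tensor (I : R -> Prop) r : is_ideal I ->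
  ann_quot (@ideal_smul _ I M) r -> ann_quot (@ideal_smul _ I T) r.
Proof.
move=> hI r_ann; apply: tensor_span.
  exact (preim_submod (scale_lin_map r) (ideal_smul_submod T hI)).
move=> m n /=; rewrite -(lin_mapZ (tensor_linl n)).
exact: ideal_smul_lin (tensor_linl n) (r_ann m).
Qed.

Lemma tensor_annihilator w : (forall n : N, w *: n = 0) -> forall x : T, w *: x = 0.
Proof.
move=> wN; apply: tensor_span (scale_eq0_submod T w) _ => m n /=.
by rewrite -(lin_mapZ (tensor_linr m)) wN (lin_map0 (tensor_linr m)).
Qed.

Lemma ann_quot_tensor_functional (I : R -> Prop) (c : N -> R) r :
  is_ideal I -> linear_mod I c ->
  ann_quot (@ideal_smul _ I T) r -> forall n, ann_quot (@ideal_smul _ I M) (r * c n).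
Proof.
move=> hI c_lin r_ann n m; have hIM := ideal_smul_submod M hI.
pose f m' n' := \pi_(quot_mod hIM) (c n' *: m').
have f_bilin : bilinear_map f.
  split=> [n' a x y | m' a x y]; rewrite /f.
    by rewrite scalerDr scalerA mulrC -scalerA pi_lin_map.
  rewrite -piZ -raddfD scalerA -scalerDl; apply/pi_eqP; rewrite -scalerBl.
  exact: ideal_smulZ.
have [g [g_lin g_t _]] := ht.2 _ _ f_bilin.
have g_IT v : ideal_smul I v -> g v = 0.
  apply: ideal_smul_min (preim_submod g_lin (zero_submod (quot_mod hIM))) _ v.
  move=> a x Ia; rewrite (lin_mapZ g_lin); elim/quotW: (g x) => y.
  by rewrite -piZ; apply/pi_eq0; apply: ideal_smulZ.
have := g_IT _ (r_ann (t m n)).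
by rewrite (lin_mapZ g_lin) g_t -piZ scalerA => /pi_eq0.
Qed.

End Tensor.

Section IndependenceMod.
Variables (R : comNzRingType) (I : R -> Prop) (N : lmodType R).
Hypothesis hI : is_ideal I.

Let IN := ideal_smul_submod N hI.

Definition indep_mod (B : seq N) :=
  forall e, ideal_smul I (comb e B) -> forall i, (i < size B)%N -> I (e i).

Definition span_mod (B : seq N) (x : N) := exists e, ideal_smul I (x - comb e B).

Lemma span_mod_submod B : is_submodule (span_mod B).
Proof.
split.
- by exists (fun _ => 0); rewrite comb0 subr0; apply: ideal_smul0.
- move=> x y [e ex] [f fy]; exists (fun i => e i + f i).
  by rewrite combD opprD addrACA; exact (submodD IN ex fy).
- move=> r x [e ex]; exists (fun i => r * e i).
  by rewrite combZ -scalerBr; exact (submodZ IN r ex).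
Qed.

Lemma span_mod_cons g B x : span_mod B x -> span_mod (g :: B) x.
Proof.
case=> e ex; exists (fun i => if i is j.+1 then e j else 0).
by rewrite comb_cons scale0r add0r.
Qed.

Lemma span_mod_head g B : span_mod (g :: B) g.
Proof.
exists (fun i => if i is 0 then 1 else 0).
by rewrite comb_cons scale1r comb0 addr0 subrr; apply: ideal_smul0.
Qed.

Lemma indep_mod_coef B e f x : indep_mod B ->
  ideal_smul I (x - comb e B) -> ideal_smul I (x - comb f B) ->
  forall i, (i < size B)%N -> I (e i - f i).
Proof.
move=> hB xe xf; apply: hB; rewrite combB.
have -> : comb e B - comb f B = (x - comb f B) - (x - comb e B).
  by rewrite opprB [RHS]addrC addrA subrK.
exact (submodB IN xf xe).
Qed.

Lemma indep_mod_cons g B : indep_mod B -> ~ indep_mod (g :: B) ->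
  exists2 u, ~ I u & span_mod B (u *: g).
Proof.
move=> hB /existsNP [e /not_implyP [e_rel /existsNP [i /not_implyP [i_lt Iei]]]].
rewrite comb_cons in e_rel.
have Ie0 : ~ I (e 0%N).
  move=> Ie0; apply: Iei; case: i i_lt => [//|i] /= i_lt.
  apply: (hB (fun j => e j.+1) _ i i_lt).
  by have := submodB IN e_rel (ideal_smulZ g Ie0); rewrite addrC addKr.
by exists (e 0%N) => //; exists (fun i => - e i.+1); rewrite combN opprK.
Qed.

End IndependenceMod.

(* B is a basis of N/pN tensored with the fraction field of R/p, and d a
   common denominator of the coordinates of the elements of s. *)
Lemma greedy_basis (R : comNzRingType) (p : R -> Prop) (N : lmodType R) (s : seq N) :
  is_prime_ideal p -> exists2 d, ~ p d &
  exists2 B, indep_mod p B & forall g, g \in s -> span_mod p B (d *: g).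
Proof.
move=> hp; have span_B (B : seq N) := span_mod_submod (prime_ideal_is_ideal hp) B.
elim: s => [|g s [d pd [B hB Bs]]]; first by exists 1; [apply: prime_idealN1 | exists [::]].
have [indep_gB | dep_gB] := pselect (indep_mod p (g :: B)).
  exists d => //; exists (g :: B) => // x /predU1P [->|xs].
    exact (submodZ (span_B _) d (span_mod_head p g B)).
  exact/span_mod_cons/Bs.
have [u pu Bug] := indep_mod_cons (prime_ideal_is_ideal hp) hB dep_gB.
exists (u * d); first exact: prime_ideal_outM.
exists B => // x /predU1P [->|xs].
  by rewrite mulrC -scalerA; exact (submodZ (span_B B) d Bug).
by rewrite -scalerA; exact (submodZ (span_B B) u (Bs x xs)).
Qed.

Section Localization.
Variables (R : comNzRingType) (p : R -> Prop) (V : lmodType R).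
Hypothesis hp : is_prime_ideal p.

Lemma common_annihilator (s : seq V) :
  (forall x, x \in s -> exists2 u, ~ p u & u *: x = 0) ->
  exists2 w, ~ p w & forall x, x \in s -> w *: x = 0.
Proof.
elim: s => [|g s IHs] s_ann; first by exists 1 => //; apply: prime_idealN1.
have [u pu ug] := s_ann g (mem_head _ _).
have [w pw ws] := IHs (fun x xs => s_ann x (@mem_behead _ (g :: s) _ xs)).
exists (u * w); first exact: prime_ideal_outM.
move=> x /predU1P [->|xs]; first by rewrite mulrC -scalerA ug scaler0.
by rewrite -scalerA ws ?scaler0.
Qed.

Lemma nakayama_seq (s : seq V) u : ~ p u ->
  (forall x, x \in s -> ideal_comb p s (u *: x)) ->
  exists2 w, ~ p w & forall x, x \in s -> w *: x = 0.
Proof.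
have hpI := prime_ideal_is_ideal hp.
elim: s u => [|g s IHs] u pu us; first by exists 1 => //; apply: prime_idealN1.
have [e pe ug] := us g (mem_head _ _); rewrite comb_cons in ug.
set v := u - e 0%N.
have pv : ~ p v by move=> /(idealD hpI (pe 0%N)); rewrite /v addrC subrK.
have vg : v *: g = comb (fun i => e i.+1) s by rewrite scalerBl ug addrAC subrr add0r.
have [w pw ws] : exists2 w, ~ p w & forall x, x \in s -> w *: x = 0.
  apply: (IHs (v * u)); first exact: prime_ideal_outM.
  move=> x xs; have [f pf ux] := us x (@mem_behead _ (g :: s) _ xs).
  rewrite comb_cons in ux.
  have -> : (v * u) *: x = f 0%N *: (v *: g) + v *: comb (fun i => f i.+1) s.
    by rewrite -scalerA ux scalerDr !scalerA mulrC.
  rewrite vg -!combZ -combD; exists (fun i => f 0%N * e i.+1 + v * f i.+1) => // j.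
  by apply: (idealD hpI); apply: (idealM hpI).
exists (w * v); first exact: prime_ideal_outM.
move=> x /predU1P [->|xs]; last by rewrite mulrC -scalerA ws ?scaler0.
by rewrite -scalerA vg; exact (submod_comb _ (scale_eq0_submod V w) ws).
Qed.

End Localization.

Section FinitelyGenerated.
Variables (R : comNzRingType) (p : R -> Prop) (N : lmodType R) (l : seq N).
Hypothesis hp : is_prime_ideal p.
Hypothesis l_gen : forall n : N, exists e, n = comb e l.

Lemma annihilator_gen w : (forall x, x \in l -> w *: x = 0) -> forall n : N, w *: n = 0.
Proof. by move=> wl n; have [e ->] := l_gen n; exact (submod_comb e (scale_eq0_submod N w) wl). Qed.

Lemma not_in_support_annihilator : ~ in_support N p ->
  exists2 w, ~ p w & forall n : N, w *: n = 0.
Proof.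
move=> suppN; have [w pw wl] : exists2 w, ~ p w & forall x, x \in l -> w *: x = 0.
  apply: (common_annihilator hp) => x _; apply: contra_notP suppN => no_u.
  by split => //; exists x => s ps sx; apply: no_u; exists s.
by exists w => //; apply: annihilator_gen.
Qed.

Lemma ideal_comb_gen y : ideal_smul p y -> ideal_comb p l y.
Proof.
have hpI := prime_ideal_is_ideal hp.
apply: (ideal_smul_min (ideal_comb_submod l hpI)) => a x pa.
have [e ->] := l_gen x; rewrite -combZ; exists (fun i => a * e i) => // j.
exact: (idealMr hpI).
Qed.

Lemma nakayama d : ~ p d -> (forall x : N, ideal_smul p (d *: x)) ->
  exists2 w, ~ p w & forall x : N, w *: x = 0.
Proof.
move=> pd dN; have [w pw wl] := nakayama_seq hp pd (fun x _ => ideal_comb_gen (dN x)).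
by exists w => //; apply: annihilator_gen.
Qed.

Lemma in_support_smul d : in_support N p -> ~ p d -> exists x : N, ~ ideal_smul p (d *: x).
Proof.
move=> [_ [n n_supp]] pd; apply/existsNP => dN.
by have [w pw wN] := nakayama pd dN; apply: n_supp w pw (wN n).
Qed.

Lemma exists_linear_mod : in_support N p ->
  exists2 c : N -> R, linear_mod p c & exists b, ~ p (c b).
Proof.
move=> suppN; have hpI := prime_ideal_is_ideal hp; have pN := ideal_smul_submod N hpI.
have [d pd [B hB Bl]] := greedy_basis l hp.
have dN x : span_mod p B (d *: x).
  have [e ->] := l_gen x.
  exact (submod_comb e (preim_submod (scale_lin_map d) (span_mod_submod hpI B)) Bl).
case: B hB {Bl} dN => [|b B] hB dN.
  have [x] := in_support_smul suppN pd; case: (dN x) => e.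
  by rewrite /comb big_ord0 subr0.
have [coef coefP] := choice dN; exists (fun x => coef x 0%N).
  move=> a x y; apply: (@indep_mod_coef _ _ _ hpI _ _ (fun i => a * coef x i + coef y i)
    _ hB (coefP (a *: x + y)) _ 0%N isT).
  rewrite combD combZ scalerDr scalerA mulrC -scalerA opprD addrACA -scalerBr.
  exact (submodD pN (submodZ pN a (coefP x)) (coefP y)).
exists b => pcb; apply: pd.
have : ideal_smul p (d *: b - comb (fun i => if i is 0 then d else 0) (b :: B)).
  by rewrite comb_cons comb0 addr0 subrr; apply: ideal_smul0.
move=> /(@indep_mod_coef _ _ _ hpI _ _ _ _ hB (coefP b))/(_ 0%N isT) pcd.
by have := idealB hpI pcb pcd; rewrite opprB addrC subrK.
Qed.

End FinitelyGenerated.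

Theorem lemma2p12 (R : comNzRingType) (M N T : lmodType R) (t : M -> N -> T) :
  noetherian_ring R ->
  finitely_generated N ->
  is_tensor_product t ->
  forall p : R -> Prop, attached T p <-> (attached M p /\ in_support N p).
Proof.
move=> _ [l l_gen] ht p; split.
  move=> attT; have hp := attT.1; have hpI := prime_ideal_is_ideal hp.
  have ann_p := (attachedP T hp).1 attT; split.
    by apply/(attachedP M hp) => r /(ann_quot_tensor ht hpI); apply: ann_p.
  apply: contrapT => suppN.
  have [w pw wN] := not_in_support_annihilator hp l_gen suppN.
  by apply: pw; apply: ann_p => x; rewrite (tensor_annihilator ht wN); apply: ideal_smul0.
move=> [attM suppN]; have hp := attM.1; have hpI := prime_ideal_is_ideal hp.
apply/(attachedP T hp) => r r_ann.
have [c c_lin [b pcb]] := exists_linear_mod hp l_gen suppN.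
have := (attachedP M hp).1 attM _ (ann_quot_tensor_functional ht hpI c_lin r_ann b).
by case/(prime_idealM hp).
Qed.
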